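(* Let $A$ be a honeycomb array with $n\geq 1$ dots. Then $n=2r+1$ for some non-negative integer $r$ and $A$ is a honeycomb array of radius $r$, i.e. its dots are contained in a Lee sphere of radius $r$. In particular, a honeycomb array consists of an odd number of dots.
   Context: Model the cells (hexagons) of the hexagonal grid by $\mathbb{Z}^2$, where cell $(x,y)$ is adjacent to the six cells $(x\pm1,y)$, $(x,y\pm1)$, $(x+1,y+1)$, $(x-1,y-1)$. The ''rows'' of the hexagonal grid in its three natural directions are the sets $\{y=c\}$, $\{x=c\}$ and $\{x-y=c\}$ for $c\in\mathbb{Z}$; two rows of the same direction are consecutive if their constants differ by $1$. A hexagonal permutation with $n$ dots is a set $\pi$ of $n$ cells such that, for each of the three directions, the rows of that direction containing a dot of $\pi$ are exactly $n$ consecutive rows, and each of these rows contains exactly one dot. A set of $n$ dots has the distinct differences property if the $n(n-1)$ vector differences $p-q$ (for ordered pairs of distinct dots $p\neq q$) are pairwise different. A honeycomb array is a hexagonal permutation with the distinct differences property. The distance between cells $(x,y)$ and $(a,b)$ is the length of a shortest path of adjacent cells joining them, namely $\max(|x-a|,|y-b|,|(x-a)-(y-b)|)$; a Lee sphere of radius $r$ with centre $(a,b)$ is the set of cells at distance at most $r$ from $(a,b)$. A honeycomb array of radius $r$ is a honeycomb array with $2r+1$ dots contained in a Lee sphere of radius $r$. *)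

From Stdlib Require Import ZArith List Lia.
Open Scope Z_scope.

Definition cell : Type := (Z * Z)%type.

(* The three row directions: {y = c}, {x = c}, {x - y = c}. *)
Definition dir_y (p : cell) : Z := snd p.
Definition dir_x (p : cell) : Z := fst p.
Definition dir_xy (p : cell) : Z := fst p - snd p.

Definition rows_ok (f : cell -> Z) (pi : list cell) : Prop :=
  exists c : Z,
    (forall p, In p pi -> c <= f p < c + Z.of_nat (length pi)) /\
    (forall k : Z, c <= k < c + Z.of_nat (length pi) ->
       exists p, In p pi /\ f p = k /\
         forall q, In q pi -> f q = k -> q = p).

Definition hex_permutation (pi : list cell) : Prop :=
  NoDup pi /\ rows_ok dir_y pi /\ rows_ok dir_x pi /\ rows_ok dir_xy pi.

Definition vsub (p q : cell) : cell := (fst p - fst q, snd p - snd q).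

Definition distinct_differences (pi : list cell) : Prop :=
  forall p q p' q', In p pi -> In q pi -> In p' pi -> In q' pi ->
    p <> q -> p' <> q' -> vsub p q = vsub p' q' -> p = p' /\ q = q'.

Definition honeycomb_array (pi : list cell) : Prop :=
  hex_permutation pi /\ distinct_differences pi.

Definition hex_dist (p q : cell) : Z :=
  Z.max (Z.abs (fst p - fst q))
        (Z.max (Z.abs (snd p - snd q))
               (Z.abs ((fst p - fst q) - (snd p - snd q)))).

Definition in_lee_sphere (r : Z) (center p : cell) : Prop :=
  hex_dist p center <= r.

Definition honeycomb_array_radius (r : Z) (pi : list cell) : Prop :=
  honeycomb_array pi /\ Z.of_nat (length pi) = 2 * r + 1 /\
  exists center : cell, forall p, In p pi -> in_lee_sphere r center p.

From Stdlib Require Import ZArith List Lia Permutation.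
Open Scope Z_scope.

(* Sum the row indices of the dots in each of the three directions.  Row
   indices occupying [c, c+n-1] sum to n(2c+n-1)/2; since the index x - y is
   the difference of the other two, the three lowest rows a (for x), b (for y)
   and c (for x - y) satisfy 2c + n - 1 = 2a - 2b.  Hence n = 2r + 1 with
   r = a - b - c, and the three strips of width 2r + 1 containing the dots
   meet exactly in the Lee sphere of radius r centred at (a + r, b + r). *)

Definition zsum (l : list Z) : Z := fold_right Z.add 0 l.

Lemma zsum_perm (l l' : list Z) : Permutation l l' -> zsum l = zsum l'.
Proof. induction 1; simpl; lia. Qed.

Lemma zsum_app (l l' : list Z) : zsum (l ++ l') = zsum l + zsum l'.
Proof. induction l; simpl; lia. Qed.

Lemma zsum_map_sub {A : Type} (f g : A -> Z) (l : list A) :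
  zsum (map (fun p => f p - g p) l) = zsum (map f l) - zsum (map g l).
Proof. induction l; simpl; lia. Qed.

Lemma zsum_consecutive (c : Z) (n : nat) :
  2 * zsum (map (fun i => c + Z.of_nat i) (seq 0 n))
  = Z.of_nat n * (2 * c + Z.of_nat n - 1).
Proof.
  induction n as [|n IHn]; [reflexivity|].
  rewrite seq_S, map_app, zsum_app, Nat2Z.inj_succ.
  cbn [map zsum fold_right Nat.add]. lia.
Qed.

Lemma rows_ok_perm_consecutive (f : cell -> Z) (pi : list cell) (c : Z) :
  NoDup pi ->
  (forall p, In p pi -> c <= f p < c + Z.of_nat (length pi)) ->
  (forall k, c <= k < c + Z.of_nat (length pi) ->
     exists p, In p pi /\ f p = k /\ forall q, In q pi -> f q = k -> q = p) ->
  Permutation (map f pi) (map (fun i => c + Z.of_nat i) (seq 0 (length pi))).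
Proof.
  intros Hnd Hrange Hrow.
  apply NoDup_Permutation.
  - apply NoDup_map_NoDup_ForallPairs; [|exact Hnd].
    intros p q Hp Hq Hpq.
    destruct (Hrow (f p) (Hrange p Hp)) as [p0 [_ [_ Hunique]]].
    now rewrite (Hunique p Hp eq_refl), (Hunique q Hq (eq_sym Hpq)).
  - apply NoDup_map_NoDup_ForallPairs; [|apply seq_NoDup].
    intros i j _ _ Hij; lia.
  - intros k; rewrite !in_map_iff; split.
    + intros [p [<- Hp]]. specialize (Hrange p Hp).
      exists (Z.to_nat (f p - c)). rewrite in_seq. lia.
    + intros [i [<- Hi]]. rewrite in_seq in Hi.
      destruct (Hrow (c + Z.of_nat i)) as [p [Hp [Hfp _]]]; [lia|].
      now exists p.
Qed.

Lemma rows_ok_sum (f : cell -> Z) (pi : list cell) :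
  NoDup pi -> rows_ok f pi ->
  exists c, (forall p, In p pi -> c <= f p < c + Z.of_nat (length pi)) /\
    2 * zsum (map f pi) = Z.of_nat (length pi) * (2 * c + Z.of_nat (length pi) - 1).
Proof.
  intros Hnd [c [Hrange Hrow]]. exists c. split; [exact Hrange|].
  rewrite <- zsum_consecutive. f_equal.
  now apply zsum_perm, rows_ok_perm_consecutive.
Qed.

Lemma hex_permutation_odd_in_lee_sphere (pi : list cell) :
  hex_permutation pi -> (1 <= length pi)%nat ->
  exists r, 0 <= r /\ Z.of_nat (length pi) = 2 * r + 1 /\
    exists center, forall p, In p pi -> in_lee_sphere r center p.
Proof.
  intros [Hnd [Hy [Hx Hxy]]] Hlen.
  destruct (rows_ok_sum _ _ Hnd Hx) as [a [Ha Sa]].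
  destruct (rows_ok_sum _ _ Hnd Hy) as [b [Hb Sb]].
  destruct (rows_ok_sum _ _ Hnd Hxy) as [c [Hc Sc]].
  rewrite (zsum_map_sub dir_x dir_y pi : zsum (map dir_xy pi) = _) in Sc.
  assert (Hn : 1 <= Z.of_nat (length pi)) by lia.
  set (n := Z.of_nat (length pi)) in *. clearbody n.
  assert (Hodd : n * (2 * (a - b - c) - (n - 1)) = 0) by nia.
  apply Z.mul_eq_0 in Hodd as [Hn0 | Hodd]; [lia|].
  exists (a - b - c). split; [lia|]. split; [lia|].
  exists (a + (a - b - c), b + (a - b - c)). intros [x y] Hp.
  specialize (Ha _ Hp); specialize (Hb _ Hp); specialize (Hc _ Hp).
  unfold in_lee_sphere, hex_dist, dir_x, dir_y, dir_xy in *; cbn [fst snd] in *. lia.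
Qed.

Theorem corollary2 (A : list cell) :
  honeycomb_array A -> (1 <= length A)%nat ->
  exists r : Z, 0 <= r /\ Z.of_nat (length A) = 2 * r + 1 /\
    honeycomb_array_radius r A.
Proof.
  intros HA Hlen.
  destruct (hex_permutation_odd_in_lee_sphere A (proj1 HA) Hlen)
    as [r [Hr [Hodd Hsphere]]].
  exists r. split; [exact Hr|]. split; [exact Hodd|].
  exact (conj HA (conj Hodd Hsphere)).
Qed.
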